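(* Let $G\le\mathrm{Aut}(\mathcal{T}_d)$ be a finitely generated, persistent, finite-state self-similar group. Then there exists a quasi-retraction $V_d(G)\to G$.
   Context: Let $X=\{1,\dots,d\}$ ($d\ge2$) with its usual order; $X^*$ is the vertex set of the rooted $d$-ary tree $\mathcal{T}_d$, ordered lexicographically. Every $f\in\mathrm{Aut}(\mathcal{T}_d)$ has a wreath recursion $f=\rho(f)(f_1,\dots,f_d)$ with $\rho(f)\in S_d$, $f_i$ determined by $f(iw)=\rho(f)(i)f_i(w)$; the states of $f$ form the smallest set containing $f$ and closed under $f\mapsto f_i$. $G$ is self-similar if it contains all states of its elements; finite-state if each element has finitely many states; persistent if there is $i$ such that $g_i=g$ for every $g\in G$. With $X^\omega$ the infinite words, for finite complete rooted subtrees $T_-,T_+$ with $n$ leaves $u_1,\dots,u_n$, $v_1,\dots,v_n$ (lexicographic order), $\sigma\in S_n$, $g_i\in G$, $[T_-,\sigma(g_1,\dots,g_n),T_+]$ is the homeomorphism of $X^\omega$ with $v_iw\mapsto u_{\sigma(i)}g_i(w)$; $V_d(G)$ is the group of all these (it is generated by the finitely generated Higman–Thompson group $V_d$, the case of all $g_i$ trivial, together with a copy of $G$, so it is finitely generated when $G$ is). For finitely generated groups $H,Q$ with word metrics $d_H,d_Q$, a map $r\colon H\to Q$ is a quasi-retraction if there are $C\ge1$, $D\ge0$ and a map $\iota\colon Q\to H$ such that $r$ and $\iota$ are $(C,D)$-Lipschitz (i.e. $d(\phi(x),\phi(x'))\le C d(x,x')+D$) and $d_Q(r\iota(x),x)\le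 D$ for all $x\in Q$. *)

From mathcomp Require Import all_boot all_fingroup.
From Stdlib Require List.
Set Implicit Arguments. Unset Strict Implicit. Unset Printing Implicit Defensive.

(* Alphabet X = {1,...,d} is modelled by 'I_d = {0,...,d-1} with its usual order. *)
(* Vertices of the rooted d-ary tree T_d = finite words X^*. *)
Definition word (d : nat) := seq 'I_d.
Definition tmap (d : nat) := word d -> word d.
Definition iword (d : nat) := nat -> 'I_d.

Definition is_aut (d : nat) (f : tmap d) : Prop :=
  bijective f /\ (forall w, size (f w) = size w)
  /\ (forall w n, f (take n w) = take n (f w)).

Definition aut_subgroup (d : nat) (G : tmap d -> Prop) : Prop :=
  (forall g, G g -> is_aut g) /\ G id
  /\ (forall g h, G g -> G h -> G (g \o h))
  /\ (forall g, G g -> exists h, G h /\ cancel g h /\ cancel h g).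

(* Section (state) of g at the vertex u: g (u w) = g(u) (sect g u)(w). *)
Definition sect (d : nat) (g : tmap d) (u : word d) : tmap d :=
  fun w => drop (size u) (g (u ++ w)).

Inductive is_state (d : nat) (g : tmap d) : tmap d -> Prop :=
  | st_self : is_state g g
  | st_next (h : tmap d) (i : 'I_d) : is_state g h -> is_state g (sect h [:: i]).

Definition self_similar (d : nat) (G : tmap d -> Prop) : Prop :=
  forall g h, G g -> is_state g h -> G h.

Definition finite_state (d : nat) (G : tmap d -> Prop) : Prop :=
  forall g, G g -> exists (n : nat) (k : nat -> tmap d),
    forall h, is_state g h -> exists i, (i < n)%N /\ h = k i.

Definition persistent (d : nat) (G : tmap d -> Prop) : Prop :=
  exists i : 'I_d, forall g, G g -> sect g [:: i] = g.

Fixpoint lexlt (d : nat) (u v : word d) : bool :=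
  match u, v with
  | [::], [::] => false
  | [::], _ :: _ => true
  | _ :: _, [::] => false
  | x :: u', y :: v' => (nat_of_ord x < nat_of_ord y)%N || ((x == y) && lexlt u' v')
  end.

Definition complete_subtree (d : nat) (T : seq (word d)) : Prop :=
  [::] \in T
  /\ (forall (v : word d) (x : 'I_d), rcons v x \in T -> v \in T)
  /\ (forall v, v \in T ->
        (forall x : 'I_d, rcons v x \in T) \/ (forall x : 'I_d, rcons v x \notin T)).

Definition leaves_list (d : nat) (T : seq (word d)) (ls : seq (word d)) : Prop :=
  sorted (@lexlt d) ls
  /\ forall v, v \in ls <-> (v \in T /\ forall x : 'I_d, rcons v x \notin T).

Definition cat_iw (d : nat) (u : word d) (w : iword d) : iword d :=
  fun n => if (n < size u)%N then nth (w 0%N) u n else w (n - size u)%N.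

Definition act_inf (d : nat) (g : tmap d) (w : iword d) : iword d :=
  fun n => nth (w n) (g (mkseq w n.+1)) n.

(* f is an element [T_-, sigma(g_1,...,g_n), T_+] of V_d(G):
   v_i w |-> u_{sigma(i)} g_i(w)   (indices 0-based here). *)
Definition in_V (d : nat) (G : tmap d -> Prop) (f : iword d -> iword d) : Prop :=
  exists (n : nat) (Tm Tp us vs : seq (word d)) (s : 'S_n) (gs : 'I_n -> tmap d),
    complete_subtree Tm /\ complete_subtree Tp
    /\ leaves_list Tm us /\ leaves_list Tp vs
    /\ size us = n /\ size vs = n
    /\ (forall i, G (gs i))
    /\ forall (i : 'I_n) (w : iword d),
         f (cat_iw (nth [::] vs i) w) = cat_iw (nth [::] us (s i)) (act_inf (gs i) w).

Definition lprod (A : Type) (L : seq (A -> A)) : A -> A :=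
  foldr (fun s t => s \o t) id L.

Definition gen_set (A : Type) (H : (A -> A) -> Prop) (S : seq (A -> A)) : Prop :=
  (forall s, List.In s S -> H s)
  /\ (forall s, List.In s S -> exists t, List.In t S /\ cancel s t /\ cancel t s)
  /\ (forall h, H h -> exists L, (forall s, List.In s L -> List.In s S) /\ h = lprod L).

Definition fin_gen (A : Type) (H : (A -> A) -> Prop) : Prop :=
  exists S, gen_set H S.

(* d_S(x, y) <= n, for the word metric d_S(x,y) = |x^-1 y|_S. *)
Definition wdist_le (A : Type) (S : seq (A -> A)) (x y : A -> A) (n : nat) : Prop :=
  exists L, (forall s, List.In s L -> List.In s S) /\ (size L <= n)%N /\ y = x \o lprod L.

Definition lipschitz (A B : Type) (H : (A -> A) -> Prop) (SH : seq (A -> A))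
  (SQ : seq (B -> B)) (phi : (A -> A) -> (B -> B)) (C D : nat) : Prop :=
  forall x x' n, H x -> H x' -> wdist_le SH x x' n -> wdist_le SQ (phi x) (phi x') (C * n + D).

Definition quasi_retraction (A B : Type) (H : (A -> A) -> Prop) (SH : seq (A -> A))
  (Q : (B -> B) -> Prop) (SQ : seq (B -> B)) (r : (A -> A) -> (B -> B)) : Prop :=
  exists (C D : nat) (iota : (B -> B) -> (A -> A)),
    (1 <= C)%N
    /\ (forall x, H x -> Q (r x))
    /\ (forall y, Q y -> H (iota y))
    /\ lipschitz H SH SQ r C D
    /\ lipschitz Q SQ SH iota C D
    /\ forall y, Q y -> wdist_le SQ (r (iota y)) y D.

(* Let i be a persistent letter, so every g in G satisfies g(i w) = g(i) g(w).
   For f in V_d(G), a chart is a cylinder X X^omega that f maps onto a cylinder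
   i^M X^omega through w |-> i^M g^-1(w) with g in G.  Charts can be lengthened
   without changing g (persistence), and any two charts of f both contain
   f^-1(i^omega); lengthening them to a common prefix of that point shows that
   g depends on f only: a mismatch i^m with m > 0 would force g^-1 to take values
   in a proper cylinder.  The retraction sends f to g^-1.  Composing f on the right
   with a generator of V_d(G) multiplies g^-1 on the right by a state of one of the
   finitely many group elements describing that generator, and finite-stateness
   bounds the word length of these states uniformly; conversely G acts on X^omega
   inside V_d(G), and this action is a right inverse of the retraction. *)
From mathcomp Require Import all_boot all_fingroup zify.
From Stdlib Require Import ClassicalEpsilon FunctionalExtensionality.
Set Implicit Arguments. Unset Strict Implicit. Unset Printing Implicit Defensive.

Section WordMetric.
Variable A : Type.
Implicit Types (S : seq (A -> A)) (x y t : A -> A).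

Lemma lprod_cat (L1 L2 : seq (A -> A)) : lprod (L1 ++ L2) = lprod L1 \o lprod L2.
Proof. by elim: L1 => //= a L1 ->. Qed.

Lemma wdist_le_trans S x y z m n :
  wdist_le S x y m -> wdist_le S y z n -> wdist_le S x z (m + n).
Proof.
move=> [L1 [sub1 [size1 ->]]] [L2 [sub2 [size2 ->]]].
exists (L1 ++ L2); split; last by rewrite size_cat leq_add // lprod_cat.
by move=> s /(List.in_app_or _ _ _) [] ?; [apply: sub1 | apply: sub2].
Qed.

Lemma wdist_le_mono S x y m n : m <= n -> wdist_le S x y m -> wdist_le S x y n.
Proof. by move=> le_mn [L [subL [sizeL E]]]; exists L; rewrite (leq_trans sizeL). Qed.

Lemma wdist_le_mulr S x t n : wdist_le S id t n -> wdist_le S x (x \o t) n.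
Proof. by move=> [L [subL [sizeL ->]]]; exists L. Qed.

Lemma gen_set_wdist (H : (A -> A) -> Prop) S x :
  gen_set H S -> H x -> exists n, wdist_le S id x n.
Proof. by move=> [_ [_ genS]] /genS [L [subL ->]]; exists (size L), L. Qed.

Lemma lprod_closed S (P : (A -> A) -> Prop) :
  (forall x s, P x -> List.In s S -> P (x \o s)) ->
  forall L x, P x -> (forall s, List.In s L -> List.In s S) -> P (x \o lprod L).
Proof.
move=> closedP; elim=> [|a L IH] x Px subL //=.
have SHa : List.In a S by apply: subL; left.
by apply: (IH (x \o a) (closedP _ _ Px SHa)) => s Ls; apply: subL; right.
Qed.

Lemma gen_set_closed (H P : (A -> A) -> Prop) S :
  gen_set H S -> P id -> (forall x s, P x -> List.In s S -> P (x \o s)) ->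
  forall x, H x -> P x.
Proof.
move=> [_ [_ genS]] Pid closedP x /genS [L [subL ->]].
exact: (lprod_closed closedP Pid subL).
Qed.

End WordMetric.

Section Lipschitz.
Variables (A B : Type).
Implicit Types (SH : seq (A -> A)) (SQ : seq (B -> B)).

Lemma lipschitz_of_generators (H P : (A -> A) -> Prop) SH SQ
    (phi : (A -> A) -> B -> B) C :
  gen_set H SH -> P id -> (forall x s, P x -> List.In s SH -> P (x \o s)) ->
  (forall x s, P x -> List.In s SH -> wdist_le SQ (phi x) (phi (x \o s)) C) ->
  lipschitz H SH SQ phi C 0.
Proof.
move=> genH Pid closedP stepP x x' n Hx _ [L [subL [sizeL ->]]].
rewrite addn0; apply: wdist_le_mono (leq_mul (leqnn C) sizeL) _.
have Px := gen_set_closed genH Pid closedP Hx; clear Hx sizeL.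
elim: L x Px subL => [|a L IH] x Px subL.
  by exists [::].
have SHa : List.In a SH by apply: subL; left.
rewrite mulnS; apply: wdist_le_trans (stepP _ _ Px SHa) _.
by apply: (IH (x \o a) (closedP _ _ Px SHa)) => s Ls; apply: subL; right.
Qed.

Lemma lipschitz_mono (H : (A -> A) -> Prop) SH SQ phi C C' D :
  C <= C' -> lipschitz H SH SQ phi C D -> lipschitz H SH SQ phi C' D.
Proof.
move=> le_C lipC x x' n Hx Hx' dxx'.
by apply: wdist_le_mono (lipC _ _ _ Hx Hx' dxx'); rewrite leq_add2r leq_mul2r le_C orbT.
Qed.

End Lipschitz.

Lemma uniform_bound_ord n (P : 'I_n -> nat -> Prop) :
  (forall a m m', m <= m' -> P a m -> P a m') ->
  (forall a, exists m, P a m) -> exists m, forall a, P a m.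
Proof.
move=> monoP /fin_all_exists [bound Pbound].
by exists (\max_a bound a) => a; apply: monoP (Pbound a); apply: leq_bigmax.
Qed.

Lemma uniform_bound_seq (T : Type) (l : seq T) (P : T -> nat -> Prop) :
  (forall x m m', m <= m' -> P x m -> P x m') ->
  (forall x, List.In x l -> exists m, P x m) -> exists m, forall x, List.In x l -> P x m.
Proof.
move=> monoP; elim: l => [|a l IH] Pl; first by exists 0.
have [m1 Pm1] := IH (fun x lx => Pl x (or_intror lx)).
have [m2 Pm2] := Pl a (or_introl erefl).
exists (maxn m1 m2) => x /= [<- | lx].
  by apply: monoP Pm2; apply: leq_maxr.
by apply: monoP (Pm1 _ lx); apply: leq_maxl.
Qed.

Lemma take_mkseq (T : Type) (f : nat -> T) m k :
  m <= k -> take m (mkseq f k) = mkseq f m.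
Proof. by move=> le_mk; rewrite /mkseq -map_take take_iota (minn_idPl le_mk). Qed.

Section InfiniteWords.
Variable d : nat.
Implicit Types (u v : word d) (w : iword d).

Lemma iword_ext (a b : iword d) : (forall n, a n = b n) -> a = b.
Proof. exact: functional_extensionality. Qed.

Lemma cat_iw0 w : cat_iw [::] w = w.
Proof. by apply: iword_ext => n; rewrite /cat_iw ltn0 subn0. Qed.

Lemma cat_iw_cat u v w : cat_iw u (cat_iw v w) = cat_iw (u ++ v) w.
Proof.
apply: iword_ext => n; rewrite /cat_iw size_cat nth_cat.
case: ltnP => lt_nu; first by rewrite ltn_addr //; apply: set_nth_default.
by rewrite ltn_subLR // subnDA; case: ifP.
Qed.

Lemma cat_iw_inj u : injective (@cat_iw d u).
Proof.
move=> a b E; apply: iword_ext => n.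
by have := congr1 (fun f => f (size u + n)) E; rewrite /cat_iw ltnNge leq_addr /= addKn.
Qed.

Lemma mkseq_cat_iw u w k : k <= size u -> mkseq (cat_iw u w) k = take k u.
Proof.
move=> le_ku; apply: (@eq_from_nth _ (w 0)).
  by rewrite size_mkseq size_take_min (minn_idPl le_ku).
move=> j; rewrite size_mkseq => lt_jk.
rewrite nth_mkseq // nth_take // /cat_iw (leq_trans lt_jk le_ku).
exact/set_nth_default/(leq_trans lt_jk le_ku).
Qed.

Lemma mkseq_cat_iw_ge u w k :
  size u <= k -> mkseq (cat_iw u w) k = u ++ mkseq w (k - size u).
Proof.
move=> le_uk; apply: (@eq_from_nth _ (w 0)).
  by rewrite size_cat !size_mkseq subnKC.
move=> j; rewrite size_mkseq => lt_jk.
rewrite nth_mkseq // nth_cat /cat_iw; case: ifP => [lt_ju|ge_ju].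
  exact: set_nth_default.
by rewrite nth_mkseq // ltn_subLR ?subnKC // leqNgt ge_ju.
Qed.

Lemma cat_iw_prefix_eq u1 u2 a b :
  size u1 = size u2 -> cat_iw u1 a = cat_iw u2 b -> u1 = u2.
Proof.
have prefix u w : mkseq (cat_iw u w) (size u) = u by rewrite mkseq_cat_iw // take_size.
by move=> size12 E; rewrite -(prefix u1 a) E size12 prefix.
Qed.

Lemma cat_nseq_const (x : 'I_d) n : cat_iw (nseq n x) (fun _ => x) = (fun _ => x).
Proof.
apply: iword_ext => k; rewrite /cat_iw size_nseq; case: ifP => // lt_kn.
by rewrite nth_nseq lt_kn.
Qed.

(* The longest prefix of W lying in T has no child in T, hence is a leaf. *)
Lemma exists_leaf_prefix (T ls : seq (word d)) (W : iword d) :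
  complete_subtree T -> leaves_list T ls ->
  exists j, j < size ls /\ nth [::] ls j = mkseq W (size (nth [::] ls j)).
Proof.
move=> [root_T [_ children_T]] [_ leavesP].
have inT0 : exists n, mkseq W n \in T by exists 0.
have boundT n : mkseq W n \in T -> n <= sumn (map size T).
  move=> WnT; rewrite -(size_mkseq W n).
  elim: T {root_T children_T leavesP inT0} WnT => //= v T IH.
  rewrite inE => /orP [/eqP <- | /IH le_n]; first exact: leq_addr.
  exact: leq_trans le_n (leq_addl _ _).
case: (ex_maxnP inT0 boundT) => n WnT maxn_T.
have [allT | noneT] := children_T _ WnT.
  by have := maxn_T n.+1; rewrite mkseqS allT ltnn => /(_ isT).
have Wn_leaf : mkseq W n \in ls by apply/leavesP.
by exists (index (mkseq W n) ls); rewrite index_mem nth_index // size_mkseq.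
Qed.

End InfiniteWords.

Section TreeAutomorphisms.
Variable d : nat.
Implicit Types (u v : word d) (w : iword d) (g h : tmap d).

Lemma tmap_ext g h : (forall u, g u = h u) -> g = h.
Proof. exact: functional_extensionality. Qed.

Lemma aut_size g u : is_aut g -> size (g u) = size u.
Proof. by case=> _ []. Qed.

Lemma aut_take g u n : is_aut g -> g (take n u) = take n (g u).
Proof. by case=> _ [] _ ->. Qed.

Lemma aut_cat g u v : is_aut g -> g (u ++ v) = g u ++ sect g u v.
Proof.
move=> aut_g; rewrite /sect -{1}(cat_take_drop (size u) (g (u ++ v))).
by rewrite -aut_take // take_size_cat.
Qed.

Lemma sect_nil g : sect g [::] = g.
Proof. by apply: tmap_ext => u; rewrite /sect drop0. Qed.

Lemma sect_cat g u v : sect g (u ++ v) = sect (sect g u) v.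
Proof. by apply: tmap_ext => w; rewrite /sect -catA drop_drop size_cat addnC. Qed.

Lemma state_sect g u : is_state g (sect g u).
Proof.
elim/last_ind: u => [|u x IH]; first by rewrite sect_nil; constructor.
by rewrite -cats1 sect_cat; constructor.
Qed.

Lemma sect_nseq g (x : 'I_d) n : sect g [:: x] = g -> sect g (nseq n x) = g.
Proof.
move=> gx; elim: n => [|n IH]; first by rewrite sect_nil.
by rewrite -[nseq n.+1 x]/([:: x] ++ nseq n x) sect_cat gx IH.
Qed.

Lemma act_mkseq g w k : is_aut g -> mkseq (act_inf g w) k = g (mkseq w k).
Proof.
move=> aut_g; apply: (@eq_from_nth _ (w 0)).
  by rewrite size_mkseq aut_size // size_mkseq.
move=> j; rewrite size_mkseq => lt_jk.
rewrite nth_mkseq // /act_inf -(take_mkseq w lt_jk) aut_take // nth_take //.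
by apply: set_nth_default; rewrite aut_size // size_mkseq.
Qed.

Lemma act_id : act_inf (@id (word d)) = id.
Proof.
by apply: functional_extensionality => w; apply: iword_ext => n; rewrite /act_inf nth_mkseq.
Qed.

Lemma act_comp g h : is_aut g -> is_aut h -> act_inf (g \o h) = act_inf g \o act_inf h.
Proof.
move=> aut_g aut_h; apply: functional_extensionality => w; apply: iword_ext => n.
rewrite /= {2}/act_inf act_mkseq // /act_inf.
by apply: set_nth_default; rewrite /= (aut_size _ aut_g) (aut_size _ aut_h) size_mkseq.
Qed.

Lemma act_cancel g h : is_aut g -> is_aut h -> cancel g h -> cancel (act_inf g) (act_inf h).
Proof.
move=> aut_g aut_h gK w.
have -> : act_inf h (act_inf g w) = act_inf (h \o g) w by rewrite act_comp.
have -> : h \o g = id by apply: tmap_ext => u; rewrite /= gK.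
by rewrite act_id.
Qed.

Lemma act_cat g u w : is_aut g ->
  act_inf g (cat_iw u w) = cat_iw (g u) (act_inf (sect g u) w).
Proof.
move=> aut_g; apply: iword_ext => n.
rewrite /act_inf [RHS]/cat_iw aut_size //; case: ltnP => lt_nu.
  rewrite mkseq_cat_iw // aut_take // nth_take //.
  by apply: set_nth_default; rewrite aut_size.
rewrite mkseq_cat_iw_ge ?(leq_trans lt_nu) // aut_cat // nth_cat aut_size //.
by rewrite ltnNge lt_nu /= subSn // /cat_iw ltnNge lt_nu.
Qed.

Lemma act_inf_head g w w' : w 0 = w' 0 -> act_inf g w 0 = act_inf g w' 0.
Proof. by move=> E; rewrite /act_inf /mkseq /= E. Qed.

Lemma act_inj (x : 'I_d) g h : is_aut g -> is_aut h -> act_inf g =1 act_inf h -> g = h.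
Proof.
move=> aut_g aut_h E; apply: tmap_ext => u.
have := act_mkseq (cat_iw u (fun _ => x)) (size u) aut_g.
have := act_mkseq (cat_iw u (fun _ => x)) (size u) aut_h.
by rewrite E !mkseq_cat_iw // take_size => -> ->.
Qed.

End TreeAutomorphisms.

Section Group.
Variables (d : nat) (G : tmap d -> Prop).
Hypothesis groupG : aut_subgroup G.
Implicit Types (g h k t : tmap d).

Lemma G_aut g : G g -> is_aut g.
Proof. by case: groupG => autG _; apply: autG. Qed.

Lemma G_id : G id.
Proof. by case: groupG => _ []. Qed.

Lemma G_comp g h : G g -> G h -> G (g \o h).
Proof. by case: groupG => _ [_ [compG _]]; apply: compG. Qed.

Definition ginv g : tmap d :=
  epsilon (inhabits id) (fun h => G h /\ cancel g h /\ cancel h g).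

Lemma ginv_spec g : G g -> G (ginv g) /\ cancel g (ginv g) /\ cancel (ginv g) g.
Proof. by case: groupG => _ [_ [_ invG]] /invG; apply: epsilon_spec. Qed.

Lemma G_ginv g : G g -> G (ginv g).
Proof. by move/ginv_spec => []. Qed.

Lemma ginvK g : G g -> cancel g (ginv g).
Proof. by move/ginv_spec => [_ []]. Qed.

Lemma ginvKV g : G g -> cancel (ginv g) g.
Proof. by move/ginv_spec => [_ []]. Qed.

Lemma ginv_ginv g : G g -> ginv (ginv g) = g.
Proof.
move=> Gg; apply: tmap_ext => u.
by rewrite -[in LHS](ginvK Gg u) (ginvK (G_ginv Gg)).
Qed.

Lemma ginv_comp k k' t : G k -> G k' -> k = t \o k' -> ginv k' = ginv k \o t.
Proof.
move=> Gk Gk' E; apply: tmap_ext => u.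
by rewrite /= -[in RHS](ginvKV Gk' u) -[t _]/((t \o k') _) -E ginvK.
Qed.

Lemma act_ginvK g : G g -> cancel (act_inf g) (act_inf (ginv g)).
Proof. by move=> Gg; apply: act_cancel (G_aut Gg) (G_aut (G_ginv Gg)) (ginvK Gg). Qed.

Lemma act_ginvKV g : G g -> cancel (act_inf (ginv g)) (act_inf g).
Proof. by move=> Gg; apply: act_cancel (G_aut (G_ginv Gg)) (G_aut Gg) (ginvKV Gg). Qed.

Lemma act_in_V g : G g -> in_V G (act_inf g).
Proof.
move=> Gg.
have root_tree : complete_subtree [:: [::] : word d].
  split; first by rewrite inE.
  by split=> [v x | v _]; [|right=> x]; rewrite inE; case: v.
have root_leaf : leaves_list [:: [::] : word d] [:: [::]].
  by split=> // v; split=> [vT | [] //]; split=> // x; rewrite inE; case: v vT.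
exists 1, [:: [::]], [:: [::]], [:: [::]], [:: [::]], 1%g, (fun _ => g).
do 7 split=> //.
by move=> [[|a] //] lt_01 w; rewrite perm1 /= !cat_iw0.
Qed.

Definition local (s : iword d -> iword d) (y u : word d) h :=
  forall R, s (cat_iw y R) = cat_iw u (act_inf h R).

Definition labelled_by (s : iword d -> iword d) n (gs : 'I_n -> tmap d) :=
  (forall a, G (gs a)) /\
  forall W, exists a y u, mkseq W (size y) = y /\ local s y u (gs a).

Lemma in_V_labelled s : in_V G s -> exists n (gs : 'I_n -> tmap d), labelled_by s gs.
Proof.
case=> n [_ [Tp [us [vs [sg [gs [_ [cTp [_ [lTp [_ [size_vs [Ggs Es]]]]]]]]]]]]].
exists n, gs; split=> // W.
have [j [lt_j Wj]] := exists_leaf_prefix W cTp lTp.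
have lt_jn : j < n by rewrite -size_vs.
exists (Ordinal lt_jn), (nth [::] vs j), (nth [::] us (sg (Ordinal lt_jn))).
by split=> //; exact: (Es (Ordinal lt_jn)).
Qed.

Lemma local_refine s y u h z : is_aut h -> local s y u h ->
  local s (y ++ z) (u ++ h z) (sect h z).
Proof. by move=> aut_h loc R; rewrite -cat_iw_cat loc act_cat // cat_iw_cat. Qed.

End Group.

Section Charts.
Variables (d : nat) (G : tmap d -> Prop) (i : 'I_d).
Hypothesis d_gt1 : 1 < d.
Hypothesis groupG : aut_subgroup G.
Hypothesis persistent_i : forall g, G g -> sect g [:: i] = g.
Hypothesis selfsimG : self_similar G.
Implicit Types (f s : iword d -> iword d) (g h : tmap d).

Local Notation i_inf := (fun _ : nat => i).

Definition chart f (X : word d) (M : nat) g :=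
  forall w, f (cat_iw X (act_inf g w)) = cat_iw (nseq M i) w.

Definition charted f := injective f /\ exists X M g, G g /\ chart f X M g.

Lemma G_sect g u : G g -> G (sect g u).
Proof. by move=> Gg; apply: selfsimG Gg (state_sect g u). Qed.

Lemma act_persistent g n : G g ->
  cat_iw (g (nseq n i)) (act_inf g i_inf) = act_inf g i_inf.
Proof.
move=> Gg; rewrite -{2}(cat_nseq_const i n) (act_cat _ _ (G_aut groupG Gg)).
by rewrite sect_nseq ?persistent_i.
Qed.

Lemma chart_extend f X M g n : G g -> chart f X M g ->
  chart f (X ++ g (nseq n i)) (M + n) g.
Proof.
move=> Gg cf w; have := cf (cat_iw (nseq n i) w).
rewrite (act_cat _ _ (G_aut groupG Gg)) sect_nseq ?persistent_i //.
by rewrite !cat_iw_cat nseqD.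
Qed.

Lemma chart_fixpoint f X M g : chart f X M g -> f (cat_iw X (act_inf g i_inf)) = i_inf.
Proof. by move=> cf; rewrite cf cat_nseq_const. Qed.

Lemma exists_other_letter (c : 'I_d) : exists o : 'I_d, o != c.
Proof.
pose o0 : 'I_d := Ordinal (ltnW d_gt1); pose o1 : 'I_d := Ordinal d_gt1.
by case: (eqVneq o0 c) => [<-|]; [exists o1 | exists o0].
Qed.

Lemma chart_same_prefix f X M1 M2 g1 g2 : injective f -> G g1 -> G g2 ->
  chart f X M1 g1 -> chart f X M2 g2 -> g1 = g2.
Proof.
wlog le_M12 : M1 M2 g1 g2 / M1 <= M2.
  move=> wlog_le inj_f Gg1 Gg2 c1 c2; case: (leqP M1 M2) => [le | /ltnW le].
    exact: wlog_le c1 c2.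
  by symmetry; apply: wlog_le c2 c1.
move=> inj_f Gg1 Gg2 c1 c2.
have shift w : act_inf g1 (cat_iw (nseq (M2 - M1) i) w) = act_inf g2 w.
  by apply/(@cat_iw_inj _ X)/inj_f; rewrite c1 c2 cat_iw_cat -nseqD subnKC.
have [m0 | m_gt0] := posnP (M2 - M1).
  apply: (act_inj i (G_aut groupG Gg1) (G_aut groupG Gg2)) => w.
  by rewrite -shift m0 cat_iw0.
(* the first letter of [g2^-1] would not depend on its argument *)
have head w : act_inf g2 w 0 = act_inf g1 i_inf 0.
  by rewrite -shift; apply: act_inf_head; rewrite /cat_iw size_nseq m_gt0 nth_nseq m_gt0.
have [o neq_o] := exists_other_letter (act_inf g1 i_inf 0).
have := head (act_inf (ginv G g2) (fun _ => o)).
by rewrite (act_ginvKV groupG) // => /eqP; rewrite (negbTE neq_o).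
Qed.

Lemma chart_label_unique f X1 M1 g1 X2 M2 g2 : injective f -> G g1 -> G g2 ->
  chart f X1 M1 g1 -> chart f X2 M2 g2 -> g1 = g2.
Proof.
move=> inj_f Gg1 Gg2 c1 c2.
pose N := maxn (size X1) (size X2).
have c1' := chart_extend (N - size X1) Gg1 c1.
have c2' := chart_extend (N - size X2) Gg2 c2.
suff E : X1 ++ g1 (nseq (N - size X1) i) = X2 ++ g2 (nseq (N - size X2) i).
  by rewrite E in c1'; exact: chart_same_prefix inj_f Gg1 Gg2 c1' c2'.
apply: (@cat_iw_prefix_eq _ _ _ (act_inf g1 i_inf) (act_inf g2 i_inf)).
  rewrite !size_cat (aut_size _ (G_aut groupG Gg1)) (aut_size _ (G_aut groupG Gg2)).
  by rewrite !size_nseq !subnKC ?leq_maxl ?leq_maxr.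
by apply: inj_f; rewrite (chart_fixpoint c1') (chart_fixpoint c2').
Qed.

Lemma chart_pull f s Y Z M h g : is_aut h -> is_aut g ->
  local s Y Z h -> chart (f \o s) Y M g -> chart f Z M (h \o g).
Proof. by move=> aut_h aut_g loc cfs w; rewrite act_comp //= -loc; apply: cfs. Qed.

(* Lengthen the chart until it lies in a cylinder on which [s] acts by one of its labels. *)
Lemma chart_refine_local F s n (gs : 'I_n -> tmap d) X M g :
  G g -> labelled_by G s gs -> chart F X M g ->
  exists a z Y Z M', chart F Y M' g /\ local s Y Z (sect (gs a) z).
Proof.
move=> Gg [Ggs labels] cF.
have [a [y [u [Wy loc]]]] := labels (cat_iw X (act_inf g i_inf)).
pose Y := X ++ g (nseq (size y - size X) i).
have size_Y : size y <= size Y.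
  by rewrite size_cat (aut_size _ (G_aut groupG Gg)) size_nseq -leq_subLR.
have take_Y : take (size y) Y = y.
  by rewrite -[in RHS]Wy -(act_persistent (size y - size X) Gg) cat_iw_cat mkseq_cat_iw.
exists a, (drop (size y) Y), Y, (u ++ gs a (drop (size y) Y)), (M + (size y - size X)).
split; first exact: chart_extend.
rewrite -{1}(cat_take_drop (size y) Y) take_Y.
exact: local_refine (G_aut groupG (Ggs a)) loc.
Qed.

Lemma charted_comp f s t : charted f -> in_V G t -> cancel s t -> cancel t s ->
  charted (f \o s).
Proof.
move=> [inj_f [X [M [g [Gg cf]]]]] Vt st ts.
split; first exact: inj_comp inj_f (can_inj st).
have [n [gs lab]] := in_V_labelled Vt.
have cf' : chart ((f \o s) \o t) X M g by move=> w; rewrite /= ts; apply: cf.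
have [a [z [Y [Z [M' [cY loc]]]]]] := chart_refine_local Gg lab cf'.
have Gh : G (sect (gs a) z) by apply: G_sect; case: lab.
exists Z, M', (sect (gs a) z \o g); split; first exact: (G_comp groupG Gh Gg).
exact: (chart_pull (G_aut groupG Gh) (G_aut groupG Gg) loc cY).
Qed.

Lemma chart_label_step f s n (gs : 'I_n -> tmap d) X M g X' M' g' :
  injective f -> G g -> G g' -> labelled_by G s gs ->
  chart f X M g -> chart (f \o s) X' M' g' -> exists a z, g = sect (gs a) z \o g'.
Proof.
move=> inj_f Gg Gg' lab cf cfs.
have [a [z [Y [Z [M'' [cY loc]]]]]] := chart_refine_local Gg' lab cfs.
have Gh : G (sect (gs a) z) by apply: G_sect; case: lab.
exists a, z; apply: chart_label_unique inj_f Gg (G_comp groupG Gh Gg') cf _.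
exact: chart_pull (G_aut groupG Gh) (G_aut groupG Gg') loc cY.
Qed.

Definition label f : tmap d :=
  epsilon (inhabits id) (fun g => G g /\ exists X M, chart f X M g).

Definition retraction f : tmap d := ginv G (label f).

Lemma label_spec f : charted f -> G (label f) /\ exists X M, chart f X M (label f).
Proof.
move=> [_ [X [M [g [Gg cf]]]]].
have ex_label : exists g, G g /\ exists X M, chart f X M g.
  by exists g; split=> //; exists X, M.
exact: epsilon_spec ex_label.
Qed.

Lemma label_chart f X M g : injective f -> G g -> chart f X M g -> label f = g.
Proof.
move=> inj_f Gg cf.
have [Gl [X' [M' cl]]] : G (label f) /\ exists X M, chart f X M (label f).
  by apply: label_spec; split=> //; exists X, M, g.
exact: chart_label_unique inj_f Gl Gg cl cf.
Qed.

Lemma retraction_act y : G y -> retraction (act_inf y) = y.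
Proof.
move=> Gy; rewrite /retraction (@label_chart _ [::] 0 (ginv G y)).
- exact: ginv_ginv.
- exact: can_inj (act_ginvK groupG Gy).
- exact: (G_ginv groupG).
- by move=> w; rewrite !cat_iw0 (act_ginvKV groupG).
Qed.

Section Generators.
Variables (SV : seq (iword d -> iword d)) (SG : seq (tmap d)).
Hypothesis genV : gen_set (in_V G) SV.
Hypothesis genG : gen_set G SG.
Hypothesis finstateG : finite_state G.

Lemma charted_id : charted id.
Proof.
split=> // ; exists [::], 0, id; split; first exact: G_id groupG.
by move=> w; rewrite act_id !cat_iw0.
Qed.

Lemma charted_compSV f s : charted f -> List.In s SV -> charted (f \o s).
Proof.
case: genV => inV [invS _] cf /invS [t [SVt [st ts]]].
exact: charted_comp cf (inV t SVt) st ts.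
Qed.

Lemma in_V_charted f : in_V G f -> charted f.
Proof. exact: gen_set_closed genV charted_id charted_compSV f. Qed.

Lemma retraction_in_G f : in_V G f -> G (retraction f).
Proof. by move/in_V_charted/label_spec => [Gl _]; exact: (G_ginv groupG). Qed.

Lemma states_bounded g : G g -> exists B, forall h, is_state g h -> wdist_le SG id h B.
Proof.
move=> Gg; have [n [k states_k]] := finstateG Gg.
have [B HB] : exists B, forall a : 'I_n, is_state g (k a) -> wdist_le SG id (k a) B.
  apply: uniform_bound_ord => [a m m' le_m P_m /P_m | a].
    exact: wdist_le_mono.
  have [state_ka | not_state_ka] := classic (is_state g (k a)).
    by have [m Hm] := gen_set_wdist genG (selfsimG Gg state_ka); exists m.
  by exists 0 => /not_state_ka.
exists B => h state_h; have [j [lt_jn E]] := states_k h state_h.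
by rewrite E; apply: (HB (Ordinal lt_jn)); rewrite -E.
Qed.

Lemma sections_bounded n (gs : 'I_n -> tmap d) : (forall a, G (gs a)) ->
  exists B, forall a u, wdist_le SG id (sect (gs a) u) B.
Proof.
move=> Ggs; apply: uniform_bound_ord => [a m m' le_m P_m u | a].
  exact: wdist_le_mono (P_m u).
have [B HB] := states_bounded (Ggs a).
by exists B => u; apply/HB/state_sect.
Qed.

Lemma retraction_step_bounded s : in_V G s -> exists B, forall f,
  charted f -> charted (f \o s) -> wdist_le SG (retraction f) (retraction (f \o s)) B.
Proof.
move=> Vs; have [n [gs lab]] := in_V_labelled Vs.
have [B HB] := sections_bounded (proj1 lab).
exists B => f cf cfs.
have [Gl [X [M cl]]] := label_spec cf; have [Gl' [X' [M' cl']]] := label_spec cfs.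
have [a [z E]] := chart_label_step cf.1 Gl Gl' lab cl cl'.
by rewrite /retraction (ginv_comp groupG Gl Gl' E); apply: wdist_le_mulr.
Qed.

Lemma retraction_lipschitz : exists C, lipschitz (in_V G) SV SG retraction C 0.
Proof.
have [C HC] : exists C, forall s, List.In s SV -> forall f, charted f ->
    charted (f \o s) -> wdist_le SG (retraction f) (retraction (f \o s)) C.
  apply: uniform_bound_seq => [s m m' le_m P_m f cf cfs | s SVs].
    exact: wdist_le_mono (P_m f cf cfs).
  by apply: retraction_step_bounded; case: genV => inV _; apply: inV.
exists C; apply: lipschitz_of_generators genV charted_id charted_compSV _.
by move=> f s cf SVs; apply: HC (charted_compSV cf SVs).
Qed.

End Generators.

End Charts.

Lemma act_lipschitz d (G : tmap d -> Prop) SV SG : aut_subgroup G ->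
  gen_set (in_V G) SV -> gen_set G SG -> exists C, lipschitz G SG SV (@act_inf d) C 0.
Proof.
move=> groupG genV genG.
have SG_G s : List.In s SG -> G s by case: genG => inG _; apply: inG.
have [C HC] : exists C, forall s, List.In s SG -> wdist_le SV id (act_inf s) C.
  apply: uniform_bound_seq => [s m m' | s SGs]; first exact: wdist_le_mono.
  exact: gen_set_wdist genV (act_in_V (SG_G s SGs)).
exists C; apply: (lipschitz_of_generators genG (G_id groupG)) => x s Gx SGs.
  exact: (G_comp groupG Gx (SG_G s SGs)).
rewrite (act_comp (G_aut groupG Gx) (G_aut groupG (SG_G s SGs))).
exact/wdist_le_mulr/HC.
Qed.

Theorem proposition5p5 (d : nat) (G : tmap d -> Prop) :
  (2 <= d)%N ->
  aut_subgroup G -> fin_gen G -> persistent G -> finite_state G -> self_similar G ->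
  forall (SV : seq (iword d -> iword d)) (SG : seq (tmap d)),
    gen_set (in_V G) SV -> gen_set G SG ->
    exists r : (iword d -> iword d) -> tmap d, quasi_retraction (in_V G) SV G SG r.
Proof.
move=> d_gt1 groupG _ [i persistent_i] finstateG selfsimG SV SG genV genG.
have [C1 r_lip] := retraction_lipschitz d_gt1 groupG persistent_i selfsimG genV genG finstateG.
have [C2 act_lip] := act_lipschitz groupG genV genG.
exists (retraction G i), (C1 + C2).+1, 0, (@act_inf d); split=> //.
split; first exact: (retraction_in_G groupG persistent_i selfsimG genV).
split; first by move=> y; apply: act_in_V.
split; first by apply: lipschitz_mono r_lip; lia.
split; first by apply: lipschitz_mono act_lip; lia.
by move=> y Gy; rewrite (retraction_act d_gt1 groupG persistent_i Gy); exists [::].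
Qed.
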